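(* Let $n\ge 0$ be an integer, $\kappa\in\mathbb{R}$, $T>0$ and $0<|\phi|<1/2$ satisfy $$\coth\big((\tfrac12-\phi)T\big)=\kappa-\coth\big((\tfrac12+\phi)T\big),$$ and set $\tau=(2n+1)T/2$. Define $$\gamma_1=\frac{\coth^2(\tau-(n-\phi)T)-1}{[\kappa-\coth(\tau-(n-\phi)T)]^2-1},\qquad \gamma_2=\frac{\coth^2(\tau-(n+\phi)T)-1}{[\kappa-\coth(\tau-(n+\phi)T)]^2-1}.$$ Then $\gamma_1\gamma_2=1$ and $\beta:=\gamma_1+\gamma_2>2$; moreover $\widehat D_s(\lambda)=\lambda^{2n}(\lambda-\gamma_1)(\lambda-\gamma_2)-(1-\gamma_1)(1-\gamma_2)$ factors as $(\lambda-1)\widehat H_s(\lambda)$ with $$\widehat H_s(\lambda)=\lambda^{2n+1}+(1-\beta)\lambda^{2n}+(2-\beta)\sum_{i=0}^{2n-1}\lambda^i,$$ and $\widehat D_s$ has a real root strictly greater than $1$. *)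

From Stdlib Require Import Reals.
Open Scope R_scope.

Definition coth (x : R) : R := cosh x / sinh x.

Fixpoint psum (f : nat -> R) (m : nat) : R :=
  match m with
  | O => 0
  | S k => psum f k + f k
  end.

Definition gamma1 (n : nat) (kappa T phi : R) : R :=
  let tau := (2 * INR n + 1) * T / 2 in
  let c := coth (tau - (INR n - phi) * T) in
  (c ^ 2 - 1) / ((kappa - c) ^ 2 - 1).

Definition gamma2 (n : nat) (kappa T phi : R) : R :=
  let tau := (2 * INR n + 1) * T / 2 in
  let c := coth (tau - (INR n + phi) * T) in
  (c ^ 2 - 1) / ((kappa - c) ^ 2 - 1).

Definition Dhat (n : nat) (g1 g2 lam : R) : R :=
  lam ^ (2 * n) * (lam - g1) * (lam - g2) - (1 - g1) * (1 - g2).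

Definition Hhat (n : nat) (beta lam : R) : R :=
  lam ^ (2 * n + 1) + (1 - beta) * lam ^ (2 * n)
  + (2 - beta) * psum (fun i => lam ^ i) (2 * n).

(* With a := coth((1/2+phi)T) and b := coth((1/2-phi)T), both > 1, the choice of tau
   collapses the defining relation to g1 = (a^2-1)/(b^2-1) and g2 = (b^2-1)/(a^2-1).
   These are reciprocal and distinct (coth is injective and phi <> 0), so their sum
   exceeds 2.  Since g1 g2 = 1, D_s = (lam - 1) H_s by the geometric sum, and
   H_s(1) = (2n+1)(2-beta) < 0 while (beta-1) H_s(beta) = D_s(beta) = beta^(2n) + beta - 2 > 0,
   so H_s has a root in (1, beta). *)
From Stdlib Require Import Reals Lra Lia Psatz.
Open Scope R_scope.

Lemma coth_gt1 x : 0 < x -> coth x > 1.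
Proof.
  intros hx. unfold coth, cosh, sinh.
  assert (exp (-x) < exp x) by (apply exp_increasing; lra).
  assert (0 < exp (-x)) by apply exp_pos.
  apply Rlt_gt, (Rmult_lt_reg_r ((exp x - exp (-x)) / 2)); [lra|].
  field_simplify; lra.
Qed.

Lemma coth_inj x y : 0 < x -> 0 < y -> coth x = coth y -> x = y.
Proof.
  intros hx hy h. unfold coth, cosh, sinh in h.
  assert (exp (-x) < exp x) by (apply exp_increasing; lra).
  assert (exp (-y) < exp y) by (apply exp_increasing; lra).
  assert (e : exp (-x) * exp y = exp x * exp (-y)).
  { apply (Rmult_eq_compat_r ((exp x - exp (-x)) * (exp y - exp (-y)))) in h.
    field_simplify in h; lra. }
  rewrite <- !exp_plus in e. apply exp_inv in e. lra.
Qed.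

Lemma sum_div_swap_gt2 p q : 0 < p -> 0 < q -> p <> q -> p / q + q / p > 2.
Proof.
  intros hp hq hpq.
  assert (e : p / q + q / p - 2 = (p - q) ^ 2 / (p * q)) by (field; lra).
  assert (0 < (p - q) ^ 2 / (p * q)).
  { apply Rdiv_lt_0_compat; [|nra].
    assert (p - q <> 0) by lra. nra. }
  lra.
Qed.

Lemma psum_geom lam m : (lam - 1) * psum (fun i => lam ^ i) m = lam ^ m - 1.
Proof.
  induction m as [|m IH]; simpl; [ring|].
  rewrite Rmult_plus_distr_l, IH. ring.
Qed.

Lemma psum_const1 m : psum (fun i => 1 ^ i) m = INR m.
Proof.
  induction m as [|m IH]; [reflexivity|]. cbn [psum].
  rewrite IH, pow1, S_INR. ring.
Qed.

Lemma continuity_psum_pow m : continuity (fun lam => psum (fun i => lam ^ i) m).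
Proof.
  induction m as [|m IH]; simpl.
  - apply continuity_const. now intros a b.
  - apply continuity_plus; [exact IH|]. apply derivable_continuous, derivable_pow.
Qed.

Lemma continuity_Hhat n beta : continuity (Hhat n beta).
Proof.
  unfold Hhat.
  repeat apply continuity_plus; try apply continuity_scal;
    try apply continuity_psum_pow; apply derivable_continuous, derivable_pow.
Qed.

Lemma Hhat_1 n beta : Hhat n beta 1 = (2 * INR n + 1) * (2 - beta).
Proof. unfold Hhat. rewrite !pow1, psum_const1, mult_INR. simpl INR. ring. Qed.

Section ReciprocalPair.

Variables (n : nat) (g1 g2 : R).
Hypothesis hprod : g1 * g2 = 1.

Lemma Dhat_factor lam : Dhat n g1 g2 lam = (lam - 1) * Hhat n (g1 + g2) lam.
Proof.
  unfold Dhat, Hhat.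
  rewrite Rmult_plus_distr_l, (Rmult_comm (2 - _)), <- Rmult_assoc,
    (Rmult_comm (lam - 1)), Rmult_assoc, psum_geom.
  replace (2 * n + 1)%nat with (S (2 * n)) by lia. simpl.
  replace ((1 - g1) * (1 - g2)) with (1 - (g1 + g2) + g1 * g2) by ring.
  replace ((lam - g1) * (lam - g2)) with (lam * lam - (g1 + g2) * lam + g1 * g2)
    by ring.
  rewrite hprod. ring.
Qed.

Lemma Dhat_sum : Dhat n g1 g2 (g1 + g2) = (g1 + g2) ^ (2 * n) + (g1 + g2) - 2.
Proof.
  unfold Dhat.
  replace (g1 + g2 - g1) with g2 by ring. replace (g1 + g2 - g2) with g1 by ring.
  replace ((1 - g1) * (1 - g2)) with (1 - (g1 + g2) + g1 * g2) by ring.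
  rewrite Rmult_assoc, (Rmult_comm g2), hprod. ring.
Qed.

Lemma Dhat_root_gt1 : g1 + g2 > 2 -> exists lam, lam > 1 /\ Dhat n g1 g2 lam = 0.
Proof.
  intros hbeta.
  assert (H1 : Hhat n (g1 + g2) 1 < 0).
  { rewrite Hhat_1. pose proof (pos_INR n). nra. }
  assert (Hbeta : 0 < Hhat n (g1 + g2) (g1 + g2)).
  { assert (0 < (g1 + g2) ^ (2 * n)) by (apply pow_lt; lra).
    assert (0 < Dhat n g1 g2 (g1 + g2)) by (rewrite Dhat_sum; lra).
    rewrite Dhat_factor in *. nra. }
  destruct (IVT _ 1 (g1 + g2) (continuity_Hhat n (g1 + g2)) ltac:(lra) H1 Hbeta)
    as [z [hz hHz]].
  assert (z <> 1) by (intro e; rewrite e in hHz; lra).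
  exists z. split; [lra|]. rewrite Dhat_factor, hHz. ring.
Qed.

End ReciprocalPair.

Lemma gamma1_eq n kappa T phi :
  coth ((1 / 2 - phi) * T) = kappa - coth ((1 / 2 + phi) * T) ->
  gamma1 n kappa T phi
  = (coth ((1 / 2 + phi) * T) ^ 2 - 1) / (coth ((1 / 2 - phi) * T) ^ 2 - 1).
Proof.
  intros hrel. unfold gamma1. cbv zeta.
  replace ((2 * INR n + 1) * T / 2 - (INR n - phi) * T) with ((1 / 2 + phi) * T)
    by field.
  now rewrite hrel.
Qed.

Lemma gamma2_eq n kappa T phi :
  coth ((1 / 2 - phi) * T) = kappa - coth ((1 / 2 + phi) * T) ->
  gamma2 n kappa T phi
  = (coth ((1 / 2 - phi) * T) ^ 2 - 1) / (coth ((1 / 2 + phi) * T) ^ 2 - 1).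
Proof.
  intros hrel. unfold gamma2. cbv zeta.
  replace ((2 * INR n + 1) * T / 2 - (INR n + phi) * T) with ((1 / 2 - phi) * T)
    by field.
  replace (kappa - coth ((1 / 2 - phi) * T)) with (coth ((1 / 2 + phi) * T)) by lra.
  reflexivity.
Qed.

Theorem mainTheorem4 (n : nat) (kappa T phi : R)
  (hT : 0 < T) (hphi0 : 0 < Rabs phi) (hphi1 : Rabs phi < 1 / 2)
  (hrel : coth ((1 / 2 - phi) * T) = kappa - coth ((1 / 2 + phi) * T)) :
  let g1 := gamma1 n kappa T phi in
  let g2 := gamma2 n kappa T phi in
  let beta := g1 + g2 in
  g1 * g2 = 1 /\ beta > 2 /\
  (forall lam : R, Dhat n g1 g2 lam = (lam - 1) * Hhat n beta lam) /\
  (exists lam : R, lam > 1 /\ Dhat n g1 g2 lam = 0).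
Proof.
  intros g1 g2 beta.
  assert (hp : -1/2 < phi < 1/2) by (destruct (Rabs_def2 phi (1/2) hphi1); lra).
  assert (hne : phi <> 0) by (intro e; rewrite e, Rabs_R0 in hphi0; lra).
  assert (ha : coth ((1 / 2 + phi) * T) > 1) by (apply coth_gt1; nra).
  assert (hb : coth ((1 / 2 - phi) * T) > 1) by (apply coth_gt1; nra).
  assert (hab : coth ((1 / 2 + phi) * T) <> coth ((1 / 2 - phi) * T))
    by (intro e; apply coth_inj in e; nra).
  assert (hprod : g1 * g2 = 1).
  { unfold g1, g2. rewrite gamma1_eq, gamma2_eq by exact hrel. field; nra. }
  assert (hbeta : beta > 2).
  { unfold beta, g1, g2. rewrite gamma1_eq, gamma2_eq by exact hrel.
    apply sum_div_swap_gt2; nra. }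
  split; [exact hprod|]. split; [exact hbeta|].
  split; [exact (Dhat_factor n g1 g2 hprod) | exact (Dhat_root_gt1 n g1 g2 hprod hbeta)].
Qed.
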